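(* Let $X$ be a real random variable taking values in the interval $\mathcal{I}\subseteq\mathbb{R}$, and let $h:\mathcal{I}\to\mathcal{J}$ have a non-decreasing upper tail with threshold $c\in(\inf\mathcal{I},\sup\mathcal{I})$. Let $h^{\star}=\sup_{x<c,\,x\in\mathcal{I}}h(x)$, $\pi_c=\mathbb{P}[h(X)\le h^{\star}]$, and define $\tilde h:\mathcal{I}\to\mathcal{J}$ by $\tilde h(x)=h^{\star}$ if $x<c$, $\tilde h(c)=\max\{h(c),h^{\star}\}$, and $\tilde h(x)=h(x)$ if $x>c$. Then $$\tilde h\big(F_X^{-1(\alpha)}(p)\big)=h\big(F_X^{-1(\alpha)}(p)\big)\quad\text{for all } p>\pi_c \text{ and } \alpha\in[0,1].$$
   Context: For a random variable $Y$ with cdf $F_Y$: $F_Y^{-1}(p)=\inf\{x\in\mathbb{R}: F_Y(x)\ge p\}$ (with $\inf\emptyset=+\infty$), $F_Y^{-1+}(p)=\sup\{x\in\mathbb{R}:F_Y(x)\le p\}$ (with $\sup\emptyset=-\infty$), and for $\alpha\in[0,1]$, $F_Y^{-1(\alpha)}(p)=(1-\alpha)F_Y^{-1}(p)+\alpha F_Y^{-1+}(p)$. $h$ is real-valued whose discontinuities (if any) are jumps at which it is left- or right-continuous. A function $h:\mathcal{I}\to\mathcal{J}$ has a non-decreasing upper tail if there exists $x'\in\mathcal{I}$ such that (1) $h(x)\le h(x')$ for all $x\in\mathcal{I}$ with $x<x'$, and (2) $h(x_1)\le h(x_2)$ for all $x_1,x_2\in\mathcal{I}$ with $x'\le x_1\le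 x_2$. Its threshold $c$ is the infimum of the (assumed nonempty) set of all such $x'$. *)

From HB Require Import structures.
From mathcomp Require Import all_boot all_order all_algebra.
From mathcomp Require Import all_classical all_reals all_analysis.
Set Implicit Arguments. Unset Strict Implicit. Unset Printing Implicit Defensive.
Import Order.TTheory GRing.Theory Num.Theory.
Import numFieldNormedType.Exports.
Local Open Scope classical_set_scope.
Local Open Scope ring_scope.

Section defs.
Context {R : realType}.

Definition jump_regular (I : interval R) (h : R -> R) : Prop :=
  forall x, x \in I ->
    (exists l : R, h @ within [set` I] x^'- --> l) /\
    (exists l : R, h @ within [set` I] x^'+ --> l) /\
    (h @ within [set` I] x^'- --> h x \/ h @ within [set` I] x^'+ --> h x).

(* x' witnesses that h : I -> R has a non-decreasing upper tail *)
Definition ndut_point (I : interval R) (h : R -> R) (x' : R) : Prop :=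
  x' \in I /\
  (forall x, x \in I -> x < x' -> h x <= h x') /\
  (forall x1 x2, x1 \in I -> x2 \in I -> x' <= x1 -> x1 <= x2 -> h x1 <= h x2).

Definition has_ndut (I : interval R) (h : R -> R) : Prop :=
  exists x', ndut_point I h x'.

Definition ndut_threshold (I : interval R) (h : R -> R) : \bar R :=
  ereal_inf (EFin @` [set x' | ndut_point I h x']).

Definition hstar (I : interval R) (h : R -> R) (c : R) : R :=
  sup (h @` [set x | x \in I /\ x < c]).

Definition htilde (I : interval R) (h : R -> R) (c : R) (x : R) : R :=
  if x < c then hstar I h c
  else if x == c then Num.max (h c) (hstar I h c)
  else h x.

End defs.

Section quantiles.
Context d {T : measurableType d} {R : realType} (P : probability T R).
Local Open Scope ereal_scope.

(* F_X^{-1}(p) = inf {x | F_X(x) >= p}, inf of the empty set = +oo *)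
Definition qinf (X : {RV P >-> R}) (p : R) : \bar R :=
  ereal_inf (EFin @` [set x | p%:E <= cdf X x]).

(* F_X^{-1+}(p) = sup {x | F_X(x) <= p}, sup of the empty set = -oo *)
Definition qsup (X : {RV P >-> R}) (p : R) : \bar R :=
  ereal_sup (EFin @` [set x | cdf X x <= p%:E]).

Definition qalpha (X : {RV P >-> R}) (alpha p : R) : \bar R :=
  ((1 - alpha)%R)%:E * qinf X p + alpha%:E * qsup X p.

End quantiles.

From HB Require Import structures.
From mathcomp Require Import all_boot all_order all_algebra.
From mathcomp Require Import all_classical all_reals all_analysis.
From mathcomp Require Import measurable_realfun.
From mathcomp Require Import lra.
Import Order.TTheory GRing.Theory Num.Theory.
Import numFieldNormedType.Exports.
Local Open Scope classical_set_scope.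
Local Open Scope ring_scope.

(* Every point of I beyond the threshold c witnesses the non-decreasing upper
   tail, so S := {x in I | h x <= h^*} is an interval containing all of I
   below c.  Hence F_X(x) <= P[X in S] = pi_c < p for x < c, and both
   quantiles F^{-1}(p), F^{-1+}(p) are at least c (and finite, as p < 1); so
   is their convex combination q.
   If q = c, one of the two quantiles equals c, so F_X >= p right of c and,
   by right continuity, F_X(c) >= p. *)

Lemma convex_comb_eq_lower {R : realFieldType} {c i s alpha : R} :
  c <= i -> c <= s -> 0 <= alpha <= 1 -> (1 - alpha) * i + alpha * s = c ->
  i = c \/ s = c.
Proof.
move=> ci cs /andP[alpha_ge0 alpha_le1] comb_c.
have [alpha_lt1|alpha_ge1] := ltP alpha 1; first by left; nra.
by right; nra.
Qed.

Section quantiles.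
Context {d : measure_display} {T : measurableType d} {R : realType}.
Context {P : probability T R} {X : {RV P >-> R}} {p : R}.
Local Open Scope ereal_scope.

Lemma cdf_le_measure (A : set R) (x : R) : measurable A ->
  (forall w, (X w <= x)%R -> A (X w)) -> cdf X x <= P (X @^-1` A).
Proof.
move=> mA XA; rewrite [cdf X x]/(P (X @^-1` `]-oo, x])).
apply: le_measure; rewrite ?inE; try exact: measurable_funPTI.
by move=> w /=; rewrite in_itv /=; exact: XA.
Qed.

Lemma cdf_eventually_gt : (p < 1)%R ->
  exists M : R, forall x, (M <= x)%R -> p%:E < cdf X x.
Proof.
move=> p_lt1.
have [M [_ cdf_gt]] := @cvgr_gt _ _ _ _ _ _ (fine_cvg (cvg_cdfy1 X)) _ p_lt1.
exists (M + 1)%R => x Mx; rewrite -[cdf X x]fineK ?fin_num_measure// lte_fin.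
by apply: cdf_gt; lra.
Qed.

Lemma cdf_ge_qinf_lt (x : R) : qinf X p < x%:E -> p%:E <= cdf X x.
Proof.
move=> /ereal_inf_lt[_ [y p_le_Fy <-]]; rewrite lte_fin => yx.
exact: le_trans p_le_Fy (cdf_nondecreasing X (ltW yx)).
Qed.

Lemma cdf_gt_qsup_lt (x : R) : qsup X p < x%:E -> p%:E < cdf X x.
Proof.
move=> qsup_lt_x; rewrite ltNge; apply/negP => Fx_le_p.
suff : x%:E <= qsup X p by rewrite leNgt qsup_lt_x.
by apply: ereal_sup_ubound; exists x.
Qed.

Lemma qinf_lt_pinfty : (p < 1)%R -> qinf X p < +oo.
Proof.
move=> /cdf_eventually_gt[M cdf_gt].
apply: (@le_lt_trans _ _ M%:E); last exact: ltry.
by apply: ge_ereal_inf; exists M%:E => //; exists M => //; exact/ltW/cdf_gt.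
Qed.

Lemma qsup_lt_pinfty : (p < 1)%R -> qsup X p < +oo.
Proof.
move=> /cdf_eventually_gt[M cdf_gt].
apply: (@le_lt_trans _ _ M%:E); last exact: ltry.
apply: ge_ereal_sup => _ [x Fx_le_p <-].
rewrite lee_fin leNgt; apply/negP => Mx.
by have := cdf_gt x (ltW Mx); rewrite ltNge Fx_le_p.
Qed.

Lemma cdf_ge_right_of (c : R) :
  (forall x, (c < x)%R -> p%:E <= cdf X x) -> p%:E <= cdf X c.
Proof.
move=> right_ge; apply: (cvge_to_ge (@cdf_right_continuous _ _ _ P X c)).
by near=> x; apply: right_ge; near: x; exact: nbhs_right_gt.
Unshelve. all: by end_near.
Qed.

Context {c : R}.
Hypothesis cdf_lt_below : forall x, (x < c)%R -> cdf X x < p%:E.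

Lemma qinf_ge : c%:E <= qinf X p.
Proof.
apply: le_ereal_inf_tmp => _ [x p_le_Fx <-]; rewrite lee_fin leNgt.
by apply/negP => /cdf_lt_below; rewrite ltNge p_le_Fx.
Qed.

Lemma qsup_ge : c%:E <= qsup X p.
Proof.
apply/lee_subgt0Pr => e e_gt0; rewrite -EFinB; apply: ereal_sup_ubound.
by exists (c - e)%R => //; apply/ltW/cdf_lt_below; rewrite ltrBlDr ltrDl.
Qed.

Hypothesis p_lt1 : (p < 1)%R.

Lemma qinf_fin_num : qinf X p \is a fin_num.
Proof.
rewrite fin_numE (lt_eqF (qinf_lt_pinfty p_lt1)) andbT.
by apply: contraTneq qinf_ge => ->.
Qed.

Lemma qsup_fin_num : qsup X p \is a fin_num.
Proof.
rewrite fin_numE (lt_eqF (qsup_lt_pinfty p_lt1)) andbT.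
by apply: contraTneq qsup_ge => ->.
Qed.

Lemma qinf_fine_ge : (c <= fine (qinf X p))%R.
Proof. by rewrite -lee_fin (fineK qinf_fin_num) qinf_ge. Qed.

Lemma qsup_fine_ge : (c <= fine (qsup X p))%R.
Proof. by rewrite -lee_fin (fineK qsup_fin_num) qsup_ge. Qed.

Context {alpha : R}.

Lemma qalphaE : qalpha X alpha p =
  ((1 - alpha) * fine (qinf X p) + alpha * fine (qsup X p))%:E.
Proof.
rewrite /qalpha -{1}(fineK qinf_fin_num) -{1}(fineK qsup_fin_num).
by rewrite -!EFinM -EFinD.
Qed.

Hypothesis alpha01 : (0 <= alpha <= 1)%R.

Lemma qalpha_ge : (c <= fine (qalpha X alpha p))%R.
Proof.
rewrite qalphaE /=; have := qinf_fine_ge; have := qsup_fine_ge.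
by case/andP: alpha01; nra.
Qed.

Lemma cdf_ge_qalpha_eq : fine (qalpha X alpha p) = c -> p%:E <= cdf X c.
Proof.
rewrite qalphaE /= => comb_c; apply: cdf_ge_right_of => x cx.
have [i_c|s_c] :=
  convex_comb_eq_lower qinf_fine_ge qsup_fine_ge alpha01 comb_c.
- by apply: cdf_ge_qinf_lt; rewrite -(fineK qinf_fin_num) lte_fin i_c.
- by apply/ltW/cdf_gt_qsup_lt; rewrite -(fineK qsup_fin_num) lte_fin s_c.
Qed.

End quantiles.

Section upper_tail.
Context {R : realType} {I : interval R} {h : R -> R} {c : R}.

Lemma htilde_gt x : c < x -> htilde I h c x = h x.
Proof. by move=> cx; rewrite /htilde ltNge (ltW cx) (gt_eqF cx). Qed.

Lemma htilde_threshold : hstar I h c <= h c -> htilde I h c c = h c.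
Proof. by move=> hstar_le; rewrite /htilde ltxx eqxx (max_l hstar_le). Qed.

Hypothesis threshold_c : ndut_threshold I h = c%:E.

Lemma ndut_point_gt_threshold x : x \in I -> c < x -> ndut_point I h x.
Proof.
move=> xI cx.
have : (ndut_threshold I h < x%:E)%E by rewrite threshold_c lte_fin.
move=> /ereal_inf_lt[_ [x' [x'I [below_x' above_x']] <-]].
rewrite lte_fin => x'x.
split=> //; split=> [z zI zx|x1 x2 x1I x2I xx1 x12].
- have [zx'|x'z] := ltP z x'; last by apply: above_x' => //; exact: ltW.
  exact: le_trans (below_x' _ zI zx') (above_x' _ _ x'I xI (lexx _) (ltW x'x)).
- by apply: above_x' => //; exact: le_trans (ltW x'x) xx1.
Qed.

Hypothesis above_c : exists b, b \in I /\ c < b.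

Lemma le_hstar x : x \in I -> x < c -> h x <= hstar I h c.
Proof.
move=> xI xc; have [b [bI cb]] := above_c.
have [_ [le_hb _]] := ndut_point_gt_threshold _ bI cb.
apply: sup_upper_bound; last by exists x.
split; first by exists (h x), x.
by exists (h b) => _ [y [yI yc] <-]; apply: le_hb => //; exact: lt_trans yc cb.
Qed.

Lemma le_hstar_downward x y : x \in I -> y \in I -> y <= x ->
  h x <= hstar I h c -> h y <= hstar I h c.
Proof.
move=> xI yI yx hx_le; have [yc|cy] := ltP y c; first exact: le_hstar.
move: yx; rewrite le_eqVlt => /predU1P[-> //|yx].
have [_ [le_hx _]] := ndut_point_gt_threshold _ xI (le_lt_trans cy yx).
exact: le_trans (le_hx _ yI yx) hx_le.
Qed.

Lemma le_hstar_le_threshold : h c <= hstar I h c ->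
  forall y, y \in I -> y <= c -> h y <= hstar I h c.
Proof.
move=> hc_le y yI; rewrite le_eqVlt => /predU1P[-> //|yc].
exact: le_hstar.
Qed.

Lemma measurable_le_hstar :
  measurable [set x | x \in I /\ h x <= hstar I h c].
Proof.
apply: is_interval_measurable => a b [aI _] [bI hb_le] z /andP[az zb].
have zI : z \in I by apply: (interval_is_interval aI bI); rewrite az zb.
by split=> //; exact: le_hstar_downward bI zI zb hb_le.
Qed.

End upper_tail.

Theorem lemma3p4 (d : measure_display) (T : measurableType d) (R : realType)
  (P : probability T R) (X : {RV P >-> R}) (I : interval R) (h : R -> R) (c : R) :
  (forall w, X w \in I) ->
  jump_regular I h ->
  has_ndut I h ->
  ndut_threshold I h = c%:E ->
  (exists a, a \in I /\ a < c) -> (exists b, b \in I /\ c < b) ->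
  let pi_c := fine (P [set w | h (X w) <= hstar I h c]) in
  forall p alpha : R, pi_c < p -> p < 1 -> 0 <= alpha <= 1 ->
    htilde I h c (fine (qalpha X alpha p)) = h (fine (qalpha X alpha p)).
Proof.
move=> XI _ _ threshold_c _ above_c pi_c p alpha pi_c_lt_p p_lt1 alpha01.
set S := [set x | x \in I /\ h x <= hstar I h c].
have mS : measurable S := measurable_le_hstar threshold_c above_c.
have preimE : [set w | h (X w) <= hstar I h c] = X @^-1` S.
  by apply/seteqP; split=> w /= => [?|[]//]; split.
have P_S : P (X @^-1` S) = pi_c%:E.
  by rewrite /pi_c preimE fineK// fin_num_measure//; exact: measurable_funPTI.
have cdf_le_pi_c x : (forall y, y \in I -> y <= x -> h y <= hstar I h c) ->
    (cdf X x <= pi_c%:E)%E.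
  move=> le_below_x; rewrite -P_S; apply: cdf_le_measure mS _ => w Xw_le.
  by split; [exact: XI | exact: le_below_x].
have cdf_lt_p x : x < c -> (cdf X x < p%:E)%E.
  move=> xc; apply: (le_lt_trans (cdf_le_pi_c x _)); last by rewrite lte_fin.
  move=> y yI yx.
  exact: le_hstar threshold_c above_c _ yI (le_lt_trans yx xc).
have := qalpha_ge cdf_lt_p p_lt1 alpha01; rewrite le_eqVlt => /predU1P[q_c|].
- rewrite -q_c htilde_threshold// leNgt; apply/negP => hc_lt.
  have := cdf_le_pi_c c (le_hstar_le_threshold threshold_c above_c (ltW hc_lt)).
  have := cdf_ge_qalpha_eq cdf_lt_p p_lt1 alpha01 (esym q_c).
  by move=> /le_trans/[apply]; rewrite lee_fin leNgt pi_c_lt_p.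
- exact: htilde_gt.
Qed.
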